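(* Let $T\in L_{aut}(\mathcal B)$ be generalized hyperbolic. Then either $\overline{B(T)}=\mathcal B$, or $T$ has a hyperbolic component. More precisely, if $\overline{B(T)}\neq\mathcal B$ then the map induced by $T$ on the quotient space $\mathcal B/\overline{B(T)}$ is hyperbolic.
   Context: $\mathcal B$ is a Banach space. $T$ is generalized hyperbolic if there is a decomposition $\mathcal B=E^-\oplus E^+$ into complementary closed subspaces with $T(E^+)\subset E^+$, $T^{-1}(E^-)\subset E^-$, and $T|_{E^+}$, $T^{-1}|_{E^-}$ uniform contractions. The bounded set $B(T)$ is the set of $x$ for which there exist $K>0$ and strictly increasing sequences of positive integers $(k_n),(m_n)$ with $|T^{k_n}x|<K$ and $|T^{-m_n}x|<K$; for generalized hyperbolic $T$, $\overline{B(T)}$ is a closed subspace with $T(\overline{B(T)})=\overline{B(T)}$. An operator is hyperbolic if its spectrum does not meet the unit circle. $T$ has a hyperbolic component if there is a closed subspace $F\ne\mathcal B$ with $T(F)=F$ such that the induced map on $\mathcal B/F$ is hyperbolic. *)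

From Stdlib Require Import Reals.
Open Scope R_scope.

Record Cx : Type := mkCx { Re : R ; Im : R }.
Definition Cadd (a b : Cx) : Cx := mkCx (Re a + Re b) (Im a + Im b).
Definition Cmul (a b : Cx) : Cx :=
  mkCx (Re a * Re b - Im a * Im b) (Re a * Im b + Im a * Re b).
Definition Cone : Cx := mkCx 1 0.
Definition Cabs (a : Cx) : R := sqrt (Re a * Re a + Im a * Im a).

Record CBanach : Type := {
  vec :> Type;
  vzero : vec;
  vadd : vec -> vec -> vec;
  vopp : vec -> vec;
  vscal : Cx -> vec -> vec;
  vnorm : vec -> R;
  vadd_assoc : forall x y z, vadd x (vadd y z) = vadd (vadd x y) z;
  vadd_comm : forall x y, vadd x y = vadd y x;
  vadd_0 : forall x, vadd x vzero = x;
  vadd_opp : forall x, vadd x (vopp x) = vzero;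
  vscal_1 : forall x, vscal Cone x = x;
  vscal_assoc : forall a b x, vscal a (vscal b x) = vscal (Cmul a b) x;
  vscal_distr_v : forall a x y, vscal a (vadd x y) = vadd (vscal a x) (vscal a y);
  vscal_distr_s : forall a b x, vscal (Cadd a b) x = vadd (vscal a x) (vscal b x);
  vnorm_nonneg : forall x, 0 <= vnorm x;
  vnorm_eq0 : forall x, vnorm x = 0 -> x = vzero;
  vnorm_triangle : forall x y, vnorm (vadd x y) <= vnorm x + vnorm y;
  vnorm_scal : forall a x, vnorm (vscal a x) = Cabs a * vnorm x;
  vcomplete : forall u : nat -> vec,
    (forall eps, 0 < eps -> exists N, forall m n, (N <= m)%nat -> (N <= n)%nat ->
        vnorm (vadd (u m) (vopp (u n))) < eps) ->
    exists l, forall eps, 0 < eps -> exists N, forall n, (N <= n)%nat ->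
        vnorm (vadd (u n) (vopp l)) < eps
}.

Arguments vzero {_}.
Arguments vadd {_}.
Arguments vopp {_}.
Arguments vscal {_}.
Arguments vnorm {_}.

Section Ops.
Variable B : CBanach.

Definition vsub (x y : B) : B := vadd x (vopp y).

Definition is_linear (T : B -> B) : Prop :=
  (forall x y, T (vadd x y) = vadd (T x) (T y)) /\
  (forall a x, T (vscal a x) = vscal a (T x)).

Definition is_bounded (T : B -> B) : Prop :=
  exists M, forall x, vnorm (T x) <= M * vnorm x.

Definition L_aut (T Tinv : B -> B) : Prop :=
  is_linear T /\ is_bounded T /\ is_linear Tinv /\ is_bounded Tinv /\
  (forall x, T (Tinv x) = x) /\ (forall x, Tinv (T x) = x).

Definition is_subspace (E : B -> Prop) : Prop :=
  E vzero /\ (forall x y, E x -> E y -> E (vadd x y)) /\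
  (forall a x, E x -> E (vscal a x)).

Definition closure (E : B -> Prop) : B -> Prop :=
  fun y => forall eps, 0 < eps -> exists x, E x /\ vnorm (vsub y x) < eps.

Definition is_closed (E : B -> Prop) : Prop :=
  forall y, closure E y -> E y.

Definition closed_subspace (E : B -> Prop) : Prop :=
  is_subspace E /\ is_closed E.

Definition complementary (E1 E2 : B -> Prop) : Prop :=
  (forall x, exists u v, E1 u /\ E2 v /\ x = vadd u v) /\
  (forall x, E1 x -> E2 x -> x = vzero).

Definition uniform_contraction_on (S : B -> B) (E : B -> Prop) : Prop :=
  exists C t, 0 < C /\ 0 < t < 1 /\
    forall n x, E x -> vnorm (Nat.iter n S x) <= C * t ^ n * vnorm x.

Definition generalized_hyperbolic (T Tinv : B -> B) : Prop :=
  exists Em Ep : B -> Prop,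
    closed_subspace Em /\ closed_subspace Ep /\ complementary Em Ep /\
    (forall x, Ep x -> Ep (T x)) /\
    (forall x, Em x -> Em (Tinv x)) /\
    uniform_contraction_on T Ep /\ uniform_contraction_on Tinv Em.

Definition bounded_set (T Tinv : B -> B) : B -> Prop :=
  fun x => exists (K : R) (k m : nat -> nat), 0 < K /\
    (forall n, (0 < k n)%nat) /\ (forall n, (k n < k (S n))%nat) /\
    (forall n, (0 < m n)%nat) /\ (forall n, (m n < m (S n))%nat) /\
    (forall n, vnorm (Nat.iter (k n) T x) < K) /\
    (forall n, vnorm (Nat.iter (m n) Tinv x) < K).

(** Quotient B/F by a closed subspace F, written out on representatives.
    The quotient norm is  |[x]| = inf_{f in F} |x - f|. *)
Definition quot_norm_le (F : B -> Prop) (x : B) (r : R) : Prop :=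
  forall eps, 0 < eps -> exists f, F f /\ vnorm (vsub x f) < r + eps.

(** S : B -> B (with S(F) ⊆ F) induces an invertible bounded operator on B/F:
    there is a linear R : B -> B with R(F) ⊆ F inducing a two-sided inverse of
    the induced map, bounded for the quotient norm. *)
Definition quot_invertible (F : B -> Prop) (S : B -> B) : Prop :=
  exists Rm : B -> B, is_linear Rm /\
    (forall x, F x -> F (Rm x)) /\
    (forall x, F (vsub (S (Rm x)) x)) /\
    (forall x, F (vsub (Rm (S x)) x)) /\
    exists M, 0 <= M /\ forall x r, 0 <= r -> quot_norm_le F x r ->
                 quot_norm_le F (Rm x) (M * r).

Definition quot_spectrum (F : B -> Prop) (T : B -> B) (lam : Cx) : Prop :=
  ~ quot_invertible F (fun x => vsub (vscal lam x) (T x)).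

Definition quot_hyperbolic (F : B -> Prop) (T : B -> B) : Prop :=
  forall lam : Cx, Cabs lam = 1 -> ~ quot_spectrum F T lam.

End Ops.

(* Solving on E^+ with T and on E^- with T^-1 yields a
      bounded linear right inverse R of I - T; R maps F into F and every
      fixed point of T lies in B(T).  Hence I - T is invertible on B/F.
   5. For |lam| = 1, lam - T = lam (I - conj(lam) T), and conj(lam) T is
      generalized hyperbolic with the same bounded set, so step 4 applies.
   The hypothesis F <> B of the theorem only ensures that B/F is nontrivial;
   the invertibility statements hold regardless. *)

From Pilot Require Import Defs.
From Stdlib Require Import Reals.
From Stdlib Require Import Lra Lia ClassicalEpsilon Classical FunctionalExtensionality PropExtensionality.
Open Scope R_scope.

Arguments vadd_assoc {_}. Arguments vadd_comm {_}. Arguments vadd_0 {_}.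
Arguments vadd_opp {_}. Arguments vscal_1 {_}. Arguments vscal_assoc {_}.
Arguments vscal_distr_v {_}. Arguments vscal_distr_s {_}.
Arguments vnorm_nonneg {_}. Arguments vnorm_eq0 {_}.
Arguments vnorm_triangle {_}. Arguments vnorm_scal {_}. Arguments vcomplete {_}.

Section VectorAlgebra.
Variable B : CBanach.

Lemma vadd0l (x : B) : vadd vzero x = x.
Proof. rewrite vadd_comm; apply vadd_0. Qed.

Lemma vaddNl (x : B) : vadd (vopp x) x = vzero.
Proof. rewrite vadd_comm; apply vadd_opp. Qed.

Lemma vadd_cancel_l (x y z : B) : vadd x y = vadd x z -> y = z.
Proof.
  intro H. rewrite <- (vadd0l y), <- (vadd0l z), <- (vaddNl x).
  rewrite <- !vadd_assoc, H. reflexivity.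
Qed.

Lemma vopp_unique (x y : B) : vadd x y = vzero -> y = vopp x.
Proof. intro H. apply (vadd_cancel_l x). rewrite H, vadd_opp. reflexivity. Qed.

Lemma vopp_opp (x : B) : vopp (vopp x) = x.
Proof. symmetry. apply vopp_unique. apply vaddNl. Qed.

Lemma vopp_add (x y : B) : vopp (vadd x y) = vadd (vopp x) (vopp y).
Proof.
  symmetry. apply vopp_unique.
  rewrite (vadd_comm (vopp x)), vadd_assoc, <- (vadd_assoc x y), vadd_opp, vadd_0, vadd_opp.
  reflexivity.
Qed.

Lemma vopp0 : vopp (@vzero B) = vzero.
Proof. symmetry; apply vopp_unique, vadd_0. Qed.

Lemma vsub_eq0 (x y : B) : vsub B x y = vzero -> x = y.
Proof.
  unfold vsub. intro H. apply vopp_unique in H. rewrite <- (vopp_opp y), H, vopp_opp. reflexivity.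
Qed.

Lemma vsubxx (x : B) : vsub B x x = vzero.
Proof. apply vadd_opp. Qed.

Lemma vsub0 (x : B) : vsub B x vzero = x.
Proof. unfold vsub; rewrite vopp0, vadd_0; reflexivity. Qed.

Lemma vsub_add_cancel (x y : B) : vadd (vsub B x y) y = x.
Proof. unfold vsub. rewrite <- vadd_assoc, vaddNl, vadd_0. reflexivity. Qed.

Lemma vadd_sub_cancel (x y : B) : vsub B (vadd x y) y = x.
Proof. unfold vsub. rewrite <- vadd_assoc, vadd_opp, vadd_0. reflexivity. Qed.

Lemma vadd_add4 (a b c d : B) : vadd (vadd a b) (vadd c d) = vadd (vadd a c) (vadd b d).
Proof.
  rewrite <- !vadd_assoc. f_equal. rewrite !vadd_assoc. f_equal. apply vadd_comm.
Qed.

Lemma vsub_add_add (a b c d : B) :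
  vsub B (vadd a b) (vadd c d) = vadd (vsub B a c) (vsub B b d).
Proof. unfold vsub. rewrite vopp_add. apply vadd_add4. Qed.

Lemma vsub_sub4 (a b c d : B) :
  vsub B (vsub B a b) (vsub B c d) = vsub B (vsub B a c) (vsub B b d).
Proof.
  change (vsub B (vadd a (vopp b)) (vadd c (vopp d)) = vadd (vsub B a c) (vopp (vsub B b d))).
  rewrite vsub_add_add. f_equal. unfold vsub. rewrite vopp_add. reflexivity.
Qed.

Lemma vsub_sub_r (z w s : B) : vsub B z (vsub B w s) = vadd (vsub B z w) s.
Proof. unfold vsub. rewrite vopp_add, vopp_opp, vadd_assoc. reflexivity. Qed.

Lemma vsub_add_r (x y z : B) : vsub B x (vadd y z) = vsub B (vsub B x y) z.
Proof. unfold vsub. rewrite vopp_add, vadd_assoc. reflexivity. Qed.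

Lemma vsub_sub_sub (a b c : B) : vadd (vsub B a b) (vsub B b c) = vsub B a c.
Proof. unfold vsub. rewrite <- vadd_assoc, (vadd_assoc (vopp b)), vaddNl, vadd0l. reflexivity. Qed.

Lemma vsub_opp (x y : B) : vopp (vsub B x y) = vsub B y x.
Proof. unfold vsub. rewrite vopp_add, vopp_opp, vadd_comm. reflexivity. Qed.

Lemma vscal0 (c : Cx) : vscal c (@vzero B) = vzero.
Proof.
  apply (vadd_cancel_l (vscal c vzero)). rewrite <- vscal_distr_v, !vadd_0. reflexivity.
Qed.

Lemma vscal_0c (x : B) : vscal (mkCx 0 0) x = vzero.
Proof.
  apply (vadd_cancel_l (vscal (mkCx 0 0) x)). rewrite <- vscal_distr_s, vadd_0.
  unfold Cadd; simpl. f_equal. f_equal; ring.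
Qed.

Lemma vscal_opp (c : Cx) (x : B) : vscal c (vopp x) = vopp (vscal c x).
Proof. apply vopp_unique. rewrite <- vscal_distr_v, vadd_opp, vscal0. reflexivity. Qed.

Lemma vopp_scal (x : B) : vopp x = vscal (mkCx (-1) 0) x.
Proof.
  symmetry. apply vopp_unique. rewrite <- (vscal_1 x) at 1. rewrite <- vscal_distr_s.
  replace (Cadd Cone (mkCx (-1) 0)) with (mkCx 0 0). apply vscal_0c.
  unfold Cadd, Cone; simpl. f_equal; ring.
Qed.

Lemma vscal_sub (c : Cx) (x y : B) : vscal c (vsub B x y) = vsub B (vscal c x) (vscal c y).
Proof. unfold vsub. rewrite vscal_distr_v, vscal_opp. reflexivity. Qed.

Lemma Cabs_real (r : R) : Cabs (mkCx r 0) = Rabs r.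
Proof. unfold Cabs; simpl. rewrite Rmult_0_r, Rplus_0_r. apply sqrt_Rsqr_abs. Qed.

Lemma vnorm0 : vnorm (@vzero B) = 0.
Proof. rewrite <- (vscal_0c vzero), vnorm_scal, Cabs_real, Rabs_R0. ring. Qed.

Lemma vnorm_opp (x : B) : vnorm (vopp x) = vnorm x.
Proof.
  rewrite vopp_scal, vnorm_scal, Cabs_real. replace (-1) with (-(1)) by ring.
  rewrite Rabs_Ropp, Rabs_R1. ring.
Qed.

Lemma vnorm_sub_sym (x y : B) : vnorm (vsub B x y) = vnorm (vsub B y x).
Proof. rewrite <- vsub_opp, vnorm_opp. reflexivity. Qed.

Lemma vnorm_sub_tri (x y z : B) :
  vnorm (vsub B x z) <= vnorm (vsub B x y) + vnorm (vsub B y z).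
Proof. rewrite <- (vsub_sub_sub x y z). apply vnorm_triangle. Qed.

Lemma vnorm_sub_le (x y : B) : vnorm (vsub B x y) <= vnorm x + vnorm y.
Proof. unfold vsub. rewrite <- (vnorm_opp y). apply vnorm_triangle. Qed.

Lemma vnorm_rev_tri (x y : B) : vnorm x - vnorm y <= vnorm (vsub B x y).
Proof. pose proof (vnorm_triangle (vsub B x y) y). rewrite vsub_add_cancel in H. lra. Qed.

Lemma vnorm_sub0 (x y : B) : vnorm (vsub B x y) = 0 -> x = y.
Proof. intro H. apply vsub_eq0, vnorm_eq0, H. Qed.

Lemma Rle_eps (a b : R) : (forall e, 0 < e -> a <= b + e) -> a <= b.
Proof.
  intro H. destruct (Rle_or_lt a b) as [|Hl]; auto.
  specialize (H ((a - b)/2) ltac:(lra)). lra.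
Qed.

Lemma lin0 (L : B -> B) : is_linear B L -> L vzero = vzero.
Proof.
  intros [Ha _]. apply (vadd_cancel_l (L vzero)). rewrite <- Ha, !vadd_0. reflexivity.
Qed.

Lemma lin_opp (L : B -> B) x : is_linear B L -> L (vopp x) = vopp (L x).
Proof.
  intros HL. apply vopp_unique. rewrite <- (proj1 HL), vadd_opp. apply lin0; auto.
Qed.

Lemma lin_sub (L : B -> B) x y : is_linear B L -> L (vsub B x y) = vsub B (L x) (L y).
Proof. intros HL. unfold vsub. rewrite (proj1 HL), lin_opp; auto. Qed.

Lemma lin_iter (L : B -> B) n : is_linear B L -> is_linear B (Nat.iter n L).
Proof.
  intros HL. induction n.
  - split; reflexivity.
  - destruct IHn as [I1 I2]. split; intros; rewrite !Nat.iter_succ;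
    [rewrite I1, (proj1 HL) | rewrite I2, (proj2 HL)]; reflexivity.
Qed.

Lemma iter_inv (L : B -> B) (G : B -> Prop) n x :
  (forall x, G x -> G (L x)) -> G x -> G (Nat.iter n L x).
Proof. intros HG Hx. induction n; auto. rewrite Nat.iter_succ. auto. Qed.

Lemma sub_opp (E : B -> Prop) x : is_subspace B E -> E x -> E (vopp x).
Proof. intros [_ [_ H]] Hx. rewrite vopp_scal. apply H, Hx. Qed.

Lemma sub_sub (E : B -> Prop) x y : is_subspace B E -> E x -> E y -> E (vsub B x y).
Proof. intros HE Hx Hy. apply (proj1 (proj2 HE)); auto. apply sub_opp; auto. Qed.

Lemma closure_incl (E : B -> Prop) x : E x -> closure B E x.
Proof. intros Hx e He. exists x. split; auto. rewrite vsubxx, vnorm0. auto. Qed.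

Lemma closure_mono (E1 E2 : B -> Prop) : (forall x, E1 x -> E2 x) ->
  forall x, closure B E1 x -> closure B E2 x.
Proof. intros H x Hx e He. destruct (Hx e He) as [y [Hy1 Hy2]]. exists y; auto. Qed.

Lemma closure_closed (E : B -> Prop) : is_closed B (closure B E).
Proof.
  intros y Hy e He. destruct (Hy (e/2) ltac:(lra)) as [z [Hz1 Hz2]].
  destruct (Hz1 (e/2) ltac:(lra)) as [w [Hw1 Hw2]]. exists w. split; auto.
  pose proof (vnorm_sub_tri y z w). lra.
Qed.

Lemma closure_subspace (E : B -> Prop) : is_subspace B E -> is_subspace B (closure B E).
Proof.
  intros HE. split; [|split].
  - apply closure_incl, (proj1 HE).
  - intros x y Hx Hy e He. destruct (Hx (e/2) ltac:(lra)) as [a [Ha1 Ha2]].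
    destruct (Hy (e/2) ltac:(lra)) as [b [Hb1 Hb2]]. exists (vadd a b). split.
    + apply (proj1 (proj2 HE)); auto.
    + rewrite vsub_add_add. pose proof (vnorm_triangle (vsub B x a) (vsub B y b)). lra.
  - intros c x Hx e He.
    destruct (Req_dec (Cabs c) 0) as [H0|H0].
    + exists vzero. split. apply (proj1 HE). rewrite vsub0, vnorm_scal, H0. lra.
    + assert (Hc : 0 < Cabs c).
      { unfold Cabs in *. pose proof (sqrt_pos (Re c * Re c + Im c * Im c)). lra. }
      destruct (Hx (e / Cabs c)) as [a [Ha1 Ha2]]. { apply Rdiv_lt_0_compat; auto. }
      exists (vscal c a). split. apply (proj2 (proj2 HE)); auto.
      rewrite <- vscal_sub, vnorm_scal.
      apply (Rmult_lt_compat_l (Cabs c)) in Ha2; auto.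
      replace (Cabs c * (e / Cabs c)) with e in Ha2 by (field; lra). auto.
Qed.

Definition rscal (c : R) (x : B) : B := vscal (mkCx c 0) x.

Lemma rscal_norm c x : vnorm (rscal c x) = Rabs c * vnorm x.
Proof. unfold rscal. rewrite vnorm_scal, Cabs_real. reflexivity. Qed.

Lemma rscal_inv c x : c <> 0 -> rscal (/ c) (rscal c x) = x.
Proof.
  intro Hc. unfold rscal. rewrite vscal_assoc. rewrite <- (vscal_1 x) at 2. f_equal.
  unfold Cmul, Cone; simpl. f_equal; field; auto.
Qed.

Lemma rscal_add c x y : rscal c (vadd x y) = vadd (rscal c x) (rscal c y).
Proof. apply vscal_distr_v. Qed.

Lemma rscal_sub c x y : rscal c (vsub B x y) = vsub B (rscal c x) (rscal c y).
Proof. apply vscal_sub. Qed.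

Lemma rscal_in (E : B -> Prop) c x : is_subspace B E -> E x -> E (rscal c x).
Proof. intros HE Hx. apply (proj2 (proj2 HE)), Hx. Qed.

End VectorAlgebra.
Section Limits.
Variable B : CBanach.

Definition is_lim (u : nat -> B) (l : B) : Prop :=
  forall e, 0 < e -> exists N, forall n, (N <= n)%nat -> vnorm (vsub B (u n) l) < e.

Lemma lim_unique u l1 l2 : is_lim u l1 -> is_lim u l2 -> l1 = l2.
Proof.
  intros H1 H2. apply vnorm_sub0. apply Rle_antisym; [|apply vnorm_nonneg].
  apply Rle_eps. intros e He.
  destruct (H1 (e/2) ltac:(lra)) as [N1 HN1]. destruct (H2 (e/2) ltac:(lra)) as [N2 HN2].
  specialize (HN1 (N1+N2)%nat ltac:(lia)). specialize (HN2 (N1+N2)%nat ltac:(lia)).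
  pose proof (vnorm_sub_tri B l1 (u (N1+N2)%nat) l2). rewrite vnorm_sub_sym in HN1. lra.
Qed.

Lemma lim_closed (E : B -> Prop) u l :
  is_closed B E -> (forall n, E (u n)) -> is_lim u l -> E l.
Proof.
  intros HE Hu Hl. apply HE. intros e He. destruct (Hl e He) as [N HN].
  exists (u N). split; auto. rewrite vnorm_sub_sym. apply HN. lia.
Qed.

Lemma lim_norm_le u l c : (forall n, vnorm (u n) <= c) -> is_lim u l -> vnorm l <= c.
Proof.
  intros Hu Hl. apply Rle_eps. intros e He. destruct (Hl e He) as [N HN].
  specialize (HN N (le_n _)). pose proof (vnorm_rev_tri B l (u N)).
  rewrite vnorm_sub_sym in HN. specialize (Hu N). lra.
Qed.

Lemma lim_ext (u w : nat -> B) l : (forall n, u n = w n) -> is_lim u l -> is_lim w l.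
Proof. intros H Hl e He. destruct (Hl e He) as [N HN]. exists N. intros. rewrite <- H. auto. Qed.

Lemma lim_shift u l : is_lim u l -> is_lim (fun n => u (S n)) l.
Proof. intros H e He. destruct (H e He) as [N HN]. exists N. intros n Hn. apply HN. lia. Qed.

Lemma lim_const (x : B) : is_lim (fun _ => x) x.
Proof. intros e He. exists O. intros. rewrite vsubxx, vnorm0. auto. Qed.

Lemma lim_lin (L : B -> B) u l : is_linear B L -> is_bounded B L -> is_lim u l ->
  is_lim (fun n => L (u n)) (L l).
Proof.
  intros HL [M HM] Hl e He.
  destruct (Hl (e / (Rabs M + 1))) as [N HN].
  { apply Rdiv_lt_0_compat; auto. pose proof (Rabs_pos M); lra. }
  exists N. intros n Hn. rewrite <- lin_sub; auto.
  specialize (HN n Hn). specialize (HM (vsub B (u n) l)).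
  pose proof (Rabs_pos M). pose proof (Rle_abs M). pose proof (vnorm_nonneg (vsub B (u n) l)).
  apply Rle_lt_trans with ((Rabs M + 1) * vnorm (vsub B (u n) l)).
  - apply Rle_trans with (1 := HM). apply Rmult_le_compat_r; lra.
  - apply (Rmult_lt_compat_l (Rabs M + 1)) in HN; [|lra].
    replace ((Rabs M + 1) * (e / (Rabs M + 1))) with e in HN by (field; lra). auto.
Qed.

Lemma lim_add u w l1 l2 :
  is_lim u l1 -> is_lim w l2 -> is_lim (fun n => vadd (u n) (w n)) (vadd l1 l2).
Proof.
  intros H1 H2 e He. destruct (H1 (e/2) ltac:(lra)) as [N1 HN1].
  destruct (H2 (e/2) ltac:(lra)) as [N2 HN2].
  exists (N1+N2)%nat. intros n Hn. rewrite vsub_add_add.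
  specialize (HN1 n ltac:(lia)). specialize (HN2 n ltac:(lia)).
  pose proof (vnorm_triangle (vsub B (u n) l1) (vsub B (w n) l2)). lra.
Qed.

Lemma lim_sub u w l1 l2 :
  is_lim u l1 -> is_lim w l2 -> is_lim (fun n => vsub B (u n) (w n)) (vsub B l1 l2).
Proof.
  intros H1 H2 e He. destruct (H1 (e/2) ltac:(lra)) as [N1 HN1].
  destruct (H2 (e/2) ltac:(lra)) as [N2 HN2].
  exists (N1+N2)%nat. intros n Hn. rewrite vsub_sub4.
  specialize (HN1 n ltac:(lia)). specialize (HN2 n ltac:(lia)).
  pose proof (vnorm_sub_le B (vsub B (u n) l1) (vsub B (w n) l2)). lra.
Qed.

Lemma pow_le_1 (q : R) k : 0 <= q <= 1 -> q ^ k <= 1.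
Proof.
  intros Hq. induction k; simpl. lra.
  pose proof (pow_le q k ltac:(lra)). nra.
Qed.

Lemma pow_small (q : R) e : 0 <= q < 1 -> 0 < e ->
  exists N, forall n, (N <= n)%nat -> q ^ n < e.
Proof.
  intros Hq He. destruct (pow_lt_1_zero q ltac:(rewrite Rabs_pos_eq; lra) e He) as [N HN].
  exists N. intros n Hn. specialize (HN n Hn). rewrite Rabs_pos_eq in HN; auto. apply pow_le; lra.
Qed.

Lemma small_mult (A w e : R) : 0 <= A -> 0 <= w -> 0 < e -> w < e / (2 * (A + 1)) -> A * w < e / 2.
Proof.
  intros HA Hw He Hlt. apply (Rmult_lt_compat_l (2 * (A + 1))) in Hlt; [|lra].
  replace (2 * (A + 1) * (e / (2 * (A + 1)))) with e in Hlt by (field; lra). nra.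
Qed.

Lemma lim_zero (u : nat -> B) c q : 0 <= c -> 0 <= q < 1 ->
  (forall n, vnorm (u n) <= c * q ^ n) -> is_lim u vzero.
Proof.
  intros Hc Hq Hu e He. destruct (pow_small q (e / (c + 1)) Hq) as [N HN].
  { apply Rdiv_lt_0_compat; lra. }
  exists N. intros n Hn. rewrite vsub0. specialize (HN n Hn). specialize (Hu n).
  apply (Rmult_lt_compat_l (c+1)) in HN; [|lra].
  replace ((c + 1) * (e / (c + 1))) with e in HN by (field; lra).
  pose proof (pow_le q n ltac:(lra)). nra.
Qed.

Fixpoint partial_sum (a : nat -> B) (n : nat) : B :=
  match n with O => vzero | S n => vadd (partial_sum a n) (a n) end.

Lemma partial_sum_in (E : B -> Prop) a n :
  is_subspace B E -> (forall k, E (a k)) -> E (partial_sum a n).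
Proof.
  intros HE Ha. induction n; simpl. apply (proj1 HE). apply (proj1 (proj2 HE)); auto.
Qed.

Section Geometric.
Variable a : nat -> B.
Variables c q : R.
Hypothesis Hc : 0 <= c.
Hypothesis Hq : 0 <= q < 1.
Hypothesis Ha : forall k, vnorm (a k) <= c * q ^ k.

Lemma partial_sum_tail m n : (m <= n)%nat ->
  vnorm (vsub B (partial_sum a n) (partial_sum a m)) <= c * q ^ m / (1 - q).
Proof.
  assert (Hd : forall d, vnorm (vsub B (partial_sum a (m + d)) (partial_sum a m))
                         <= c * q ^ m * (1 - q ^ d) / (1 - q)).
  { induction d.
    - rewrite Nat.add_0_r, vsubxx, vnorm0. simpl. replace (1 - 1) with 0 by ring.
      unfold Rdiv. rewrite Rmult_0_r, Rmult_0_l. lra.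
    - replace (m + S d)%nat with (S (m + d)) by lia. simpl.
      unfold vsub. rewrite <- vadd_assoc, (vadd_comm (a (m+d)%nat)), vadd_assoc.
      fold (vsub B (partial_sum a (m + d)) (partial_sum a m)).
      eapply Rle_trans. apply vnorm_triangle.
      specialize (Ha (m + d)%nat). rewrite pow_add in Ha.
      replace (c * q ^ m * (1 - q * q ^ d) / (1 - q)) with
         (c * q ^ m * (1 - q ^ d) / (1 - q) + c * (q ^ m * q ^ d)) by (field; lra).
      lra. }
  intros Hmn. replace n with (m + (n - m))%nat by lia.
  eapply Rle_trans. apply Hd. unfold Rdiv. apply Rmult_le_compat_r.
  - apply Rlt_le, Rinv_0_lt_compat; lra.
  - pose proof (pow_le q m ltac:(lra)). pose proof (pow_le q (n - m) ltac:(lra)).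
    pose proof (Rmult_le_pos _ _ (Rmult_le_pos _ _ Hc H) H0). nra.
Qed.

Lemma geom_series : exists l, is_lim (partial_sum a) l /\ vnorm l <= c / (1 - q).
Proof.
  destruct (vcomplete (partial_sum a)) as [l Hl].
  { intros e He. destruct (pow_small q (e * (1 - q) / (c + 1)) Hq) as [N HN].
    { apply Rdiv_lt_0_compat; nra. }
    assert (Hg : forall m n, (N <= m)%nat -> (m <= n)%nat ->
                 vnorm (vsub B (partial_sum a n) (partial_sum a m)) < e).
    { intros m n Hm Hmn. eapply Rle_lt_trans. apply partial_sum_tail; auto.
      specialize (HN m Hm). pose proof (pow_le q m ltac:(lra)).
      apply Rmult_lt_reg_r with (1 - q). lra.
      replace (c * q ^ m / (1 - q) * (1 - q)) with (c * q ^ m) by (field; lra).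
      apply (Rmult_lt_compat_l (c+1)) in HN; [|lra].
      replace ((c + 1) * (e * (1 - q) / (c + 1))) with (e * (1 - q)) in HN by (field; lra).
      nra. }
    exists N. intros m n Hm Hn. change (vnorm (vsub B (partial_sum a m) (partial_sum a n)) < e).
    destruct (Nat.le_ge_cases m n).
    - rewrite vnorm_sub_sym. apply Hg; auto.
    - apply Hg; auto. }
  exists l. split. exact Hl.
  apply (lim_norm_le (partial_sum a)); auto. intros n.
  pose proof (partial_sum_tail O n ltac:(lia)) as H. simpl in H. rewrite vsub0 in H. lra.
Qed.

End Geometric.
End Limits.
Section Baire.
Variable B : CBanach.

Definition avoiding_ball (A : B -> Prop) (y0 : B) (r : R) (p : B * R) : Prop :=
  vnorm (vsub B (fst p) y0) < r / 2 /\ 0 < snd p <= r / 4 /\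
  forall x, A x -> snd p <= vnorm (vsub B (fst p) x).

Lemma avoiding_ball_exists (A : B -> Prop) y0 r : 0 < r ->
  ~ (forall y, vnorm (vsub B y y0) < r / 2 -> closure B A y) ->
  exists p, avoiding_ball A y0 r p.
Proof.
  intros Hr Hno.
  assert (Hy : exists y, vnorm (vsub B y y0) < r / 2 /\ ~ closure B A y).
  { apply NNPP. intro Hy. apply Hno. intros y Hy1. apply NNPP. intro Hy2. apply Hy. exists y. auto. }
  destruct Hy as [y [Hy1 Hy2]].
  assert (He : exists e, 0 < e /\ forall x, A x -> e <= vnorm (vsub B y x)).
  { apply NNPP. intro He. apply Hy2. intros e He0. apply NNPP. intro Hx. apply He.
    exists e. split; auto. intros x Hsx. apply Rnot_lt_le. intro Hlt. apply Hx. exists x; auto. }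
  destruct He as [e [He1 He2]].
  exists (y, Rmin e (r/4)). unfold avoiding_ball; simpl. split; auto. split.
  - split. apply Rmin_pos; lra. apply Rmin_r.
  - intros x Hx. eapply Rle_trans. apply Rmin_l. auto.
Qed.

Lemma nested_balls_limit (sq : nat -> B * R) :
  snd (sq O) <= 1 -> (forall k, 0 < snd (sq k)) ->
  (forall k, vnorm (vsub B (fst (sq (S k))) (fst (sq k))) < snd (sq k) / 2 /\
             snd (sq (S k)) <= snd (sq k) / 4) ->
  exists x, forall k, vnorm (vsub B (fst (sq k)) x) <= 2/3 * snd (sq k).
Proof.
  intros H0 Hpos Hstep.
  assert (Hr : forall k, snd (sq k) <= (/4) ^ k).
  { induction k. simpl; lra. destruct (Hstep k) as [_ H].
    change ((/4)^(S k)) with (/4 * (/4)^k). lra. }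
  assert (Hdist : forall d k, vnorm (vsub B (fst (sq (k + d)%nat)) (fst (sq k))) <= 2/3 * snd (sq k)).
  { induction d; intros k.
    - rewrite Nat.add_0_r, vsubxx, vnorm0. pose proof (Hpos k). lra.
    - replace (k + S d)%nat with (S k + d)%nat by lia.
      eapply Rle_trans. apply vnorm_sub_tri with (y := fst (sq (S k))).
      specialize (IHd (S k)). destruct (Hstep k). lra. }
  destruct (vcomplete (fun k => fst (sq k))) as [x Hx].
  { intros e He. destruct (pow_small (/4) (e * 3 / 4)) as [N HN]; [lra|lra|].
    exists N. intros m n Hm Hn. change (vnorm (vsub B (fst (sq m)) (fst (sq n))) < e).
    pose proof (Hdist (m - N)%nat N) as H1. pose proof (Hdist (n - N)%nat N) as H2.
    replace (N + (m - N))%nat with m in H1 by lia. replace (N + (n - N))%nat with n in H2 by lia.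
    eapply Rle_lt_trans. apply vnorm_sub_tri with (y := fst (sq N)).
    rewrite (vnorm_sub_sym _ (fst (sq N))). specialize (HN N (le_n _)). specialize (Hr N). lra. }
  exists x. intros k. apply Rle_eps. intros e He. destruct (Hx e He) as [N HN].
  specialize (HN (k + N)%nat ltac:(lia)). specialize (Hdist N k).
  change (vnorm (vsub B (fst (sq (k + N)%nat)) x) < e) in HN.
  pose proof (vnorm_sub_tri B (fst (sq k)) (fst (sq (k + N)%nat)) x).
  rewrite vnorm_sub_sym in Hdist. lra.
Qed.

Theorem baire_category (A : nat -> B -> Prop) : (forall x, exists n, A n x) ->
  exists n y0 r, 0 < r /\ forall y, vnorm (vsub B y y0) < r -> closure B (A n) y.
Proof.
  intros Hcover. apply NNPP. intro Hno.
  set (P n y0 r := fun p => 0 < r -> avoiding_ball (A n) y0 r p).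
  assert (Hex : forall n y0 r, exists p, P n y0 r p).
  { intros n y0 r. destruct (Rlt_or_le 0 r) as [Hr|Hr]; [|exists (vzero, 1); intro; lra].
    destruct (avoiding_ball_exists (A n) y0 r Hr) as [p Hp].
    { intro Hball. apply Hno. exists n, y0, (r/2). split; [lra|auto]. }
    exists p. intros _. exact Hp. }
  set (step n y0 r := epsilon (inhabits (@vzero B, 1)) (P n y0 r)).
  set (sq := fix sq (k : nat) : B * R :=
         match k with O => (vzero, 1) | S k => step k (fst (sq k)) (snd (sq k)) end).
  assert (Hsq : forall k, 0 < snd (sq k) /\ avoiding_ball (A k) (fst (sq k)) (snd (sq k)) (sq (S k))).
  { assert (Hstep : forall k, 0 < snd (sq k) ->
                    avoiding_ball (A k) (fst (sq k)) (snd (sq k)) (sq (S k))).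
    { intros k Hk. apply (epsilon_spec (inhabits (@vzero B, 1)) (P _ _ _) (Hex _ _ _)); auto. }
    induction k.
    - split. simpl; lra. apply Hstep; simpl; lra.
    - destruct IHk as [_ [_ [[H1 _] _]]]. split; auto. }
  destruct (nested_balls_limit sq) as [x Hx].
  - simpl; lra.
  - intros k. apply Hsq.
  - intros k. destruct (Hsq k) as [_ [H1 [[_ H2] _]]]. split; auto.
  - destruct (Hcover x) as [n Hn].
    destruct (Hsq n) as [_ [_ [[H1 _] H3]]]. specialize (H3 x Hn). specialize (Hx (S n)).
    pose proof (proj1 (Hsq (S n))). lra.
Qed.

End Baire.

(** For complementary closed subspaces E^- and E^+, the projection onto E^-
    along E^+ is bounded (the open-mapping argument). *)
Section Projection.
Variable B : CBanach.
Variables Em Ep : B -> Prop.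
Hypothesis HEm : closed_subspace B Em.
Hypothesis HEp : closed_subspace B Ep.
Hypothesis Hc : Defs.complementary B Em Ep.

Lemma decomp_unique u1 v1 u2 v2 : Em u1 -> Ep v1 -> Em u2 -> Ep v2 ->
  vadd u1 v1 = vadd u2 v2 -> u1 = u2 /\ v1 = v2.
Proof.
  intros H1 H2 H3 H4 H.
  assert (Hu : vsub B u1 u2 = vsub B v2 v1).
  { rewrite <- (vsub_opp B v1 v2). apply vopp_unique.
    rewrite vadd_comm, <- vsub_add_add, H, vsubxx. reflexivity. }
  assert (H0 : vsub B u1 u2 = vzero).
  { apply (proj2 Hc). apply sub_sub; auto. apply HEm. rewrite Hu. apply sub_sub; auto. apply HEp. }
  apply vsub_eq0 in H0. subst u2. split; auto. apply (vadd_cancel_l B u1). auto.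
Qed.

Definition decomp_le (n : nat) (x : B) : Prop :=
  exists u v, Em u /\ Ep v /\ x = vadd u v /\ vnorm u <= INR n.

(** The constant
    comes from a ball contained in the closure of some [decomp_le n]. *)
Lemma approx_decomposition : exists M0, 0 <= M0 /\ forall z, exists u v, Em u /\ Ep v /\
   vnorm u <= M0 * vnorm z /\ vnorm (vsub B z (vadd u v)) <= vnorm z / 2.
Proof.
  destruct (baire_category B decomp_le) as [n [y0 [r [Hr Hb]]]].
  { intros x. destruct (proj1 Hc x) as [u [v [Hu [Hv Hx]]]].
    destruct (INR_unbounded (vnorm u)) as [n Hn]. exists n, u, v. repeat split; auto. lra. }
  assert (Hrinv : 0 <= / r) by (apply Rlt_le, Rinv_0_lt_compat; auto).
  exists (4 * INR n / r). split. { apply Rmult_le_pos; auto. pose proof (pos_INR n); lra. }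
  intros z. destruct (Req_dec (vnorm z) 0) as [Hz|Hz].
  { apply vnorm_eq0 in Hz. subst z. exists vzero, vzero. repeat split.
    apply (proj1 (proj1 HEm)). apply (proj1 (proj1 HEp)). rewrite vnorm0; lra.
    rewrite vadd_0, vsubxx, vnorm0. lra. }
  assert (Hzp : 0 < vnorm z) by (pose proof (vnorm_nonneg z); lra).
  set (c := r / (2 * vnorm z)). assert (Hcp : 0 < c) by (unfold c; apply Rdiv_lt_0_compat; lra).
  set (z' := rscal B c z).
  assert (Hz' : vnorm z' = r / 2).
  { unfold z'. rewrite rscal_norm, Rabs_pos_eq by lra. unfold c. field. lra. }
  destruct (Hb (vadd y0 z') ltac:(rewrite vadd_comm, vadd_sub_cancel; lra) (r/8) ltac:(lra))
    as [s1 [[u1 [v1 [Hu1 [Hv1 [Hs1 Hn1]]]]] Hd1]].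
  destruct (Hb y0 ltac:(rewrite vsubxx, vnorm0; lra) (r/8) ltac:(lra))
    as [s2 [[u2 [v2 [Hu2 [Hv2 [Hs2 Hn2]]]]] Hd2]].
  exists (rscal B (/c) (vsub B u1 u2)), (rscal B (/c) (vsub B v1 v2)).
  split. apply rscal_in. apply HEm. apply sub_sub; auto. apply HEm.
  split. apply rscal_in. apply HEp. apply sub_sub; auto. apply HEp.
  assert (Hic : Rabs (/ c) = 2 * vnorm z / r).
  { rewrite Rabs_pos_eq. unfold c. field. split; lra. apply Rlt_le, Rinv_0_lt_compat; auto. }
  split.
  - rewrite rscal_norm, Hic. pose proof (vnorm_sub_le B u1 u2).
    apply Rle_trans with (2 * vnorm z / r * (INR n + INR n)).
    apply Rmult_le_compat_l. apply Rmult_le_pos; lra. lra.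
    right. field. lra.
  - rewrite <- rscal_add. rewrite <- (rscal_inv B c z) at 1 by lra. rewrite <- rscal_sub.
    rewrite rscal_norm, Hic. fold z'.
    assert (Heq : vsub B z' (vadd (vsub B u1 u2) (vsub B v1 v2)) =
                  vsub B (vsub B (vadd y0 z') s1) (vsub B y0 s2)).
    { rewrite vsub_sub4, (vadd_comm y0 z'), vadd_sub_cancel, Hs1, Hs2, vsub_add_add. reflexivity. }
    rewrite Heq. pose proof (vnorm_sub_le B (vsub B (vadd y0 z') s1) (vsub B y0 s2)).
    apply Rle_trans with (2 * vnorm z / r * (r / 8 + r / 8)).
    apply Rmult_le_compat_l. apply Rmult_le_pos; lra. lra.
    right. field. lra.
Qed.

(** Iterating the approximate decomposition on the successive errors and
    summing the (geometrically small) pieces gives an exact decomposition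
    z = U + (z - U) with |U| <= 2 M0 |z|. *)
Lemma exact_decomposition : exists K, 0 <= K /\ forall z, exists U,
  Em U /\ Ep (vsub B z U) /\ vnorm U <= K * vnorm z.
Proof.
  destruct approx_decomposition as [M0 [HM0 Ha]].
  assert (Hg : forall z, exists p : B * B, Em (fst p) /\ Ep (snd p) /\ vnorm (fst p) <= M0 * vnorm z /\
      vnorm (vsub B z (vadd (fst p) (snd p))) <= vnorm z / 2).
  { intros z. destruct (Ha z) as [u [v H]]. exists (u, v). exact H. }
  set (g := fun z => proj1_sig (constructive_indefinite_description _ (Hg z))).
  assert (Hgs : forall w, Em (fst (g w)) /\ Ep (snd (g w)) /\ vnorm (fst (g w)) <= M0 * vnorm w /\
      vnorm (vsub B w (vadd (fst (g w)) (snd (g w)))) <= vnorm w / 2).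
  { intros w. unfold g. apply (proj2_sig (constructive_indefinite_description _ (Hg w))). }
  exists (2 * M0). split. lra. intros z.
  set (err := fun k => Nat.iter k (fun w => vsub B w (vadd (fst (g w)) (snd (g w)))) z).
  assert (Herr : forall k, vnorm (err k) <= vnorm z * (/2) ^ k).
  { induction k. simpl. lra. unfold err. rewrite Nat.iter_succ. fold (err k).
    destruct (Hgs (err k)) as [_ [_ [_ H]]]. change ((/2)^(S k)) with (/2 * (/2)^k). lra. }
  set (a := fun k => fst (g (err k))). set (b := fun k => snd (g (err k))).
  destruct (geom_series B a (M0 * vnorm z) (/2)) as [U [HU1 HU2]].
  { apply Rmult_le_pos; auto. apply vnorm_nonneg. } { lra. }
  { intros k. unfold a. destruct (Hgs (err k)) as [_ [_ [H _]]]. specialize (Herr k).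
    eapply Rle_trans. apply H. rewrite Rmult_assoc. apply Rmult_le_compat_l; auto. }
  assert (Hsum : forall n, vadd (partial_sum B a n) (partial_sum B b n) = vsub B z (err n)).
  { induction n. simpl. rewrite vadd_0, vsubxx. reflexivity.
    change (vadd (vadd (partial_sum B a n) (a n)) (vadd (partial_sum B b n) (b n)) =
      vsub B z (vsub B (err n) (vadd (a n) (b n)))).
    rewrite vadd_add4, IHn, vsub_sub_r. reflexivity. }
  assert (Hbl : is_lim B (partial_sum B b) (vsub B z U)).
  { apply (lim_ext B (fun n => vsub B (vsub B z (err n)) (partial_sum B a n))).
    { intros n. rewrite <- Hsum, vadd_comm, vadd_sub_cancel. reflexivity. }
    replace (vsub B z U) with (vsub B (vsub B z vzero) U) by (rewrite vsub0; reflexivity).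
    apply lim_sub; auto. apply lim_sub. apply lim_const.
    apply (lim_zero B err (vnorm z) (/2)); auto. apply vnorm_nonneg. lra. }
  exists U. split; [|split].
  - apply (lim_closed B Em (partial_sum B a)); auto. apply HEm.
    intros n. apply partial_sum_in. apply HEm. intros k. apply Hgs.
  - apply (lim_closed B Ep (partial_sum B b)); auto. apply HEp.
    intros n. apply partial_sum_in. apply HEp. intros k. apply Hgs.
  - eapply Rle_trans. apply HU2. right. field.
Qed.

Lemma proj_bound : exists K, 0 <= K /\
  forall z u v, Em u -> Ep v -> z = vadd u v -> vnorm u <= K * vnorm z.
Proof.
  destruct exact_decomposition as [K [HK Hd]]. exists K. split; auto.
  intros z u v Hu Hv Hz. destruct (Hd z) as [U [HUm [HUp HUn]]].
  assert (Hdec : vadd U (vsub B z U) = vadd u v) by (rewrite vadd_comm, vsub_add_cancel; auto).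
  destruct (decomp_unique _ _ _ _ HUm HUp Hu Hv Hdec) as [<- _]. exact HUn.
Qed.

End Projection.
Section Contraction.
Variable B : CBanach.
Variable L : B -> B.
Variable E : B -> Prop.
Hypothesis HLl : is_linear B L.
Hypothesis HLb : is_bounded B L.
Hypothesis HE : closed_subspace B E.
Hypothesis HLE : forall x, E x -> E (L x).
Variables C t : R.
Hypothesis HC : 0 < C.
Hypothesis Ht : 0 < t < 1.
Hypothesis Hct : forall n x, E x -> vnorm (Nat.iter n L x) <= C * t ^ n * vnorm x.

Lemma contraction_fix_zero y : E y -> L y = y -> y = vzero.
Proof.
  intros Hy Hf. assert (Hit : forall n, Nat.iter n L y = y).
  { induction n; auto. rewrite Nat.iter_succ, IHn; auto. }
  destruct (pow_small t (/ (2 * C)) ltac:(lra)) as [N HN]. { apply Rinv_0_lt_compat; lra. }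
  specialize (HN N (le_n _)). specialize (Hct N y Hy). rewrite Hit in Hct.
  apply vnorm_eq0. pose proof (vnorm_nonneg y).
  assert (C * t ^ N <= / 2).
  { apply (Rmult_lt_compat_l C) in HN; auto. replace (C * / (2 * C)) with (/2) in HN by (field; lra). lra. }
  nra.
Qed.

Lemma neumann_step v n :
  partial_sum B (fun k => Nat.iter k L v) (S n) = vadd v (L (partial_sum B (fun k => Nat.iter k L v) n)).
Proof.
  induction n.
  - simpl. rewrite lin0, vadd_0, vadd0l; auto.
  - change (partial_sum B (fun k => Nat.iter k L v) (S (S n))) with
      (vadd (partial_sum B (fun k => Nat.iter k L v) (S n)) (Nat.iter (S n) L v)).
    rewrite IHn at 1. change (partial_sum B (fun k => Nat.iter k L v) (S n)) with
      (vadd (partial_sum B (fun k => Nat.iter k L v) n) (Nat.iter n L v)).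
    rewrite (proj1 HLl), vadd_assoc. reflexivity.
Qed.

Lemma neumann_solve v : E v -> exists y, E y /\ y = vadd v (L y) /\
  vnorm y <= C / (1 - t) * vnorm v /\
  (forall G, is_subspace B G -> (forall x, G x -> G (L x)) -> G v -> closure B G y).
Proof.
  intros Hv. set (s := partial_sum B (fun k => Nat.iter k L v)).
  destruct (geom_series B (fun k => Nat.iter k L v) (C * vnorm v) t) as [l [Hl Hn]].
  { pose proof (vnorm_nonneg v). nra. } { lra. }
  { intros k. rewrite Rmult_assoc, (Rmult_comm (vnorm v)), <- Rmult_assoc. apply Hct; auto. }
  exists l. split; [|split; [|split]].
  - apply (lim_closed B E s l (proj2 HE)); auto. intros n. apply partial_sum_in. apply HE.
    intros k. apply iter_inv; auto.
  - apply (lim_unique B (fun n => s (S n))).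
    + apply lim_shift; auto.
    + apply (lim_ext B (fun n => vadd v (L (s n)))).
      { intros n. unfold s. rewrite neumann_step. reflexivity. }
      apply lim_add. apply lim_const. apply lim_lin; auto.
  - unfold Rdiv. rewrite Rmult_assoc, (Rmult_comm (/ (1-t))), <- Rmult_assoc. exact Hn.
  - intros G HG HGL HGv. apply (lim_closed B (closure B G) s l (closure_closed B G)); auto.
    intros n. apply closure_incl. apply partial_sum_in; auto. intros k. apply iter_inv; auto.
Qed.

End Contraction.
Section Core.
Variable B : CBanach.
Variables T Ti : B -> B.
Hypothesis HTl : is_linear B T.
Hypothesis HTb : is_bounded B T.
Hypothesis HTil : is_linear B Ti.
Hypothesis HTib : is_bounded B Ti.
Hypothesis HTTi : forall x, T (Ti x) = x.
Hypothesis HTiT : forall x, Ti (T x) = x.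
Variables Em Ep : B -> Prop.
Hypothesis HEm : closed_subspace B Em.
Hypothesis HEp : closed_subspace B Ep.
Hypothesis Hc : Defs.complementary B Em Ep.
Hypothesis HEpT : forall x, Ep x -> Ep (T x).
Hypothesis HEmT : forall x, Em x -> Em (Ti x).
Variables Cp tp Cm tm : R.
Hypothesis HCp : 0 < Cp.
Hypothesis Htp : 0 < tp < 1.
Hypothesis Hcp : forall n x, Ep x -> vnorm (Nat.iter n T x) <= Cp * tp ^ n * vnorm x.
Hypothesis HCm : 0 < Cm.
Hypothesis Htm : 0 < tm < 1.
Hypothesis Hcm : forall n x, Em x -> vnorm (Nat.iter n Ti x) <= Cm * tm ^ n * vnorm x.
Variable K0 : R.
Hypothesis HK0 : 0 <= K0.
Hypothesis HK0b : forall z u v, Em u -> Ep v -> z = vadd u v -> vnorm u <= K0 * vnorm z.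

Lemma iter_TTi n x : Nat.iter n T (Nat.iter n Ti x) = x.
Proof.
  induction n; auto. rewrite (Nat.iter_succ_r n _ T), (Nat.iter_succ n _ Ti), HTTi. auto.
Qed.

Lemma iter_TiT n x : Nat.iter n Ti (Nat.iter n T x) = x.
Proof.
  induction n; auto. rewrite (Nat.iter_succ_r n _ Ti), (Nat.iter_succ n _ T), HTiT. auto.
Qed.

(** Vectors that eventually enter E^+ forwards and E^- backwards; their
    orbits decay in both directions, so they are bounded. *)
Definition eventual_set (x : B) : Prop :=
  exists N, Ep (Nat.iter N T x) /\ Em (Nat.iter N Ti x).

Lemma Ep_later a c x : Ep (Nat.iter a T x) -> Ep (Nat.iter (c + a) T x).
Proof. intros Hx. rewrite Nat.iter_add. apply iter_inv; auto. Qed.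

Lemma Em_later a c x : Em (Nat.iter a Ti x) -> Em (Nat.iter (c + a) Ti x).
Proof. intros Hx. rewrite Nat.iter_add. apply iter_inv; auto. Qed.

Lemma eventual_of a b x : Ep (Nat.iter a T x) -> Em (Nat.iter b Ti x) -> eventual_set x.
Proof.
  intros H1 H2. exists (a + b)%nat. split.
  - rewrite Nat.add_comm. apply Ep_later; auto.
  - apply Em_later; auto.
Qed.

Lemma eventual_subspace : is_subspace B eventual_set.
Proof.
  split; [|split].
  - exists O. simpl. split; [exact (proj1 (proj1 HEp))|exact (proj1 (proj1 HEm))].
  - intros x y [N1 [H1 H2]] [N2 [H3 H4]]. apply (eventual_of (N1 + N2) (N1 + N2)).
    + rewrite (proj1 (lin_iter B T _ HTl)). apply (proj1 (proj2 (proj1 HEp))).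
      * rewrite Nat.add_comm. apply Ep_later; auto.
      * apply Ep_later; auto.
    + rewrite (proj1 (lin_iter B Ti _ HTil)). apply (proj1 (proj2 (proj1 HEm))).
      * rewrite Nat.add_comm. apply Em_later; auto.
      * apply Em_later; auto.
  - intros c x [N [H1 H2]]. exists N. split.
    + rewrite (proj2 (lin_iter B T _ HTl)). apply (proj2 (proj2 (proj1 HEp))); auto.
    + rewrite (proj2 (lin_iter B Ti _ HTil)). apply (proj2 (proj2 (proj1 HEm))); auto.
Qed.

Lemma eventual_T x : eventual_set x -> eventual_set (T x).
Proof.
  intros [N [H1 H2]]. apply (eventual_of N (S N)).
  - rewrite <- Nat.iter_succ_r, Nat.iter_succ. auto.
  - rewrite Nat.iter_succ_r, HTiT. auto.
Qed.

Lemma eventual_bounded x : eventual_set x -> bounded_set B T Ti x.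
Proof.
  intros [N [H1 H2]].
  exists (Cp * vnorm (Nat.iter N T x) + Cm * vnorm (Nat.iter N Ti x) + 1),
    (fun n => (S n + N)%nat), (fun n => (S n + N)%nat).
  pose proof (vnorm_nonneg (Nat.iter N T x)). pose proof (vnorm_nonneg (Nat.iter N Ti x)).
  pose proof (Rmult_le_pos _ _ (Rlt_le _ _ HCp) H). pose proof (Rmult_le_pos _ _ (Rlt_le _ _ HCm) H0).
  split. lra. split. intros; lia. split. intros; lia. split. intros; lia. split. intros; lia.
  split.
  - intros n. rewrite Nat.iter_add. eapply Rle_lt_trans. apply Hcp; auto.
    pose proof (pow_le_1 tp (S n) ltac:(lra)). pose proof (pow_le tp (S n) ltac:(lra)). nra.
  - intros n. rewrite Nat.iter_add. eapply Rle_lt_trans. apply Hcm; auto.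
    pose proof (pow_le_1 tm (S n) ltac:(lra)). pose proof (pow_le tm (S n) ltac:(lra)). nra.
Qed.

Lemma fix_bounded x : T x = x -> bounded_set B T Ti x.
Proof.
  intros Hf. assert (Hi : Ti x = x) by (rewrite <- Hf at 1; apply HTiT).
  assert (H1 : forall n, Nat.iter n T x = x) by (induction n; auto; rewrite Nat.iter_succ, IHn; auto).
  assert (H2 : forall n, Nat.iter n Ti x = x) by (induction n; auto; rewrite Nat.iter_succ, IHn; auto).
  exists (vnorm x + 1), S, S. pose proof (vnorm_nonneg x).
  repeat split; intros; try lia; try lra; rewrite ?H1, ?H2; lra.
Qed.

(** Correcting x by a vector a in E^- at time k makes the k-th forward
    iterate lie in E^+; the correction, seen at time 0, is small. *)
Lemma split_forward k x : exists a, Em a /\ Ep (vsub B (Nat.iter k T x) a) /\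
  vnorm (Nat.iter k Ti a) <= Cm * tm ^ k * (K0 * vnorm (Nat.iter k T x)).
Proof.
  destruct (proj1 Hc (Nat.iter k T x)) as [a [b [Ha [Hb Hab]]]].
  exists a. split; [|split]; auto.
  - rewrite Hab, vadd_comm, vadd_sub_cancel. exact Hb.
  - eapply Rle_trans. apply Hcm; auto. apply Rmult_le_compat_l.
    + pose proof (pow_le tm k ltac:(lra)). nra.
    + apply (HK0b _ a b); auto.
Qed.

Lemma split_backward m x : exists d, Ep d /\ Em (vsub B (Nat.iter m Ti x) d) /\
  vnorm (Nat.iter m T d) <= Cp * tp ^ m * ((1 + K0) * vnorm (Nat.iter m Ti x)).
Proof.
  destruct (proj1 Hc (Nat.iter m Ti x)) as [c [d [Hc' [Hd Hcd]]]].
  assert (Hdd : d = vsub B (Nat.iter m Ti x) c) by (rewrite Hcd, vadd_comm, vadd_sub_cancel; auto).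
  exists d. split; [|split]; auto.
  - rewrite Hcd, vadd_sub_cancel. exact Hc'.
  - eapply Rle_trans. apply Hcp; auto. apply Rmult_le_compat_l.
    + pose proof (pow_le tp m ltac:(lra)). nra.
    + rewrite Hdd. eapply Rle_trans. apply vnorm_sub_le.
      pose proof (HK0b (Nat.iter m Ti x) c d Hc' Hd Hcd). lra.
Qed.

Lemma eventual_corrected k m x a d : Em a -> Ep (vsub B (Nat.iter k T x) a) ->
  Ep d -> Em (vsub B (Nat.iter m Ti x) d) ->
  eventual_set (vsub B x (vadd (Nat.iter k Ti a) (Nat.iter m T d))).
Proof.
  intros Ha Hxa Hd Hxd. apply (eventual_of k m).
  - rewrite lin_sub, (proj1 (lin_iter B T _ HTl)), iter_TTi, vsub_add_r by (apply lin_iter; auto).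
    apply sub_sub; auto. apply HEp. rewrite <- Nat.iter_add. apply iter_inv; auto.
  - rewrite lin_sub, (proj1 (lin_iter B Ti _ HTil)), iter_TiT by (apply lin_iter; auto).
    rewrite (vadd_comm _ d), vsub_add_r.
    apply sub_sub; auto. apply HEm. rewrite <- Nat.iter_add. apply iter_inv; auto.
Qed.

Lemma incr_ge (k : nat -> nat) : (forall n, (k n < k (S n))%nat) -> forall n, (n <= k n)%nat.
Proof. intros Hk n. induction n. lia. specialize (Hk n). lia. Qed.

(** A bounded vector is approximated by eventual ones: apply the two
    corrections at late times k, m where its orbit is still bounded by K. *)
Lemma bounded_approx x : bounded_set B T Ti x -> closure B eventual_set x.
Proof.
  intros [K [k [m [HK [_ [Hk [_ [Hm [HkK HmK]]]]]]]]] e He.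
  set (A1 := Cm * K0 * K). set (A2 := Cp * (1 + K0) * K).
  assert (HA1 : 0 <= A1) by (unfold A1; apply Rmult_le_pos; [apply Rmult_le_pos|]; lra).
  assert (HA2 : 0 <= A2) by (unfold A2; apply Rmult_le_pos; [apply Rmult_le_pos|]; lra).
  destruct (pow_small tm (e / (2 * (A1 + 1)))) as [N1 HN1]; [lra|apply Rdiv_lt_0_compat; lra|].
  destruct (pow_small tp (e / (2 * (A2 + 1)))) as [N2 HN2]; [lra|apply Rdiv_lt_0_compat; lra|].
  set (kk := k N1). set (mm := m N2).
  specialize (HN1 kk (incr_ge k Hk N1)). specialize (HN2 mm (incr_ge m Hm N2)).
  destruct (split_forward kk x) as [a [Ha [Hxa Hpa]]].
  destruct (split_backward mm x) as [d [Hd [Hxd Hqd]]].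
  set (p := Nat.iter kk Ti a). set (q := Nat.iter mm T d).
  assert (Hp : vnorm p <= A1 * tm ^ kk).
  { eapply Rle_trans. apply Hpa. pose proof (pow_le tm kk ltac:(lra)).
    replace (A1 * tm ^ kk) with (Cm * tm ^ kk * (K0 * K)) by (unfold A1; ring).
    apply Rmult_le_compat_l; [nra|]. apply Rmult_le_compat_l; auto. apply Rlt_le, HkK. }
  assert (Hq : vnorm q <= A2 * tp ^ mm).
  { eapply Rle_trans. apply Hqd. pose proof (pow_le tp mm ltac:(lra)).
    replace (A2 * tp ^ mm) with (Cp * tp ^ mm * ((1 + K0) * K)) by (unfold A2; ring).
    apply Rmult_le_compat_l; [nra|]. apply Rmult_le_compat_l; [lra|]. apply Rlt_le, HmK. }
  exists (vsub B x (vadd p q)). split.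
  - apply eventual_corrected; auto.
  - rewrite vsub_sub_r, vsubxx, vadd0l. eapply Rle_lt_trans. apply vnorm_triangle.
    pose proof (small_mult _ _ _ HA1 (pow_le tm kk ltac:(lra)) He HN1).
    pose proof (small_mult _ _ _ HA2 (pow_le tp mm ltac:(lra)) He HN2).
    lra.
Qed.

Lemma closure_bounded_eq : closure B (bounded_set B T Ti) = closure B eventual_set.
Proof.
  apply functional_extensionality. intros x. apply propositional_extensionality. split.
  - intros Hx. apply closure_closed. revert x Hx. apply closure_mono. apply bounded_approx.
  - apply closure_mono. apply eventual_bounded.
Qed.

(** [resolvent_rel x y]: y solves y - T y = x, obtained by splitting
    x = u + v (u in E^-, v in E^+) and solving y1 = v + T y1 in E^+ and
    y2 - T y2 = u in E^- separately. *)
Definition resolvent_rel (x y : B) : Prop := exists y1 y2 v u,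
  Ep y1 /\ Em y2 /\ Ep v /\ Em u /\ y = vadd y1 y2 /\ x = vadd u v /\
  y1 = vadd v (T y1) /\ vsub B y2 (T y2) = u.

(** Existence, with a linear norm bound, from the Neumann series of T on E^+
    and of T^-1 on E^- (y2 = - z where z = T^-1 u + T^-1 z). *)
Lemma resolvent_rel_exists : exists M, 0 <= M /\
  forall x, exists y, resolvent_rel x y /\ vnorm y <= M * vnorm x.
Proof.
  assert (Hp : 0 <= Cp / (1 - tp)) by (apply Rmult_le_pos; [lra|apply Rlt_le, Rinv_0_lt_compat; lra]).
  assert (Hm : 0 <= Cm / (1 - tm)) by (apply Rmult_le_pos; [lra|apply Rlt_le, Rinv_0_lt_compat; lra]).
  exists (Cp / (1 - tp) * (1 + K0) + Cm / (1 - tm) * (Cm * K0)). split.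
  { pose proof (Rmult_le_pos _ _ (Rlt_le _ _ HCm) HK0). nra. }
  intros x. destruct (proj1 Hc x) as [u [v [Hu [Hv Hx]]]].
  destruct (neumann_solve B T Ep HTl HTb HEp HEpT Cp tp HCp Htp Hcp v Hv)
    as [y1 [Hy1 [Hy1e [Hy1n _]]]].
  destruct (neumann_solve B Ti Em HTil HTib HEm HEmT Cm tm HCm Htm Hcm (Ti u) (HEmT u Hu))
    as [z [Hz [Hze [Hzn _]]]].
  exists (vadd y1 (vopp z)). split.
  - exists y1, (vopp z), v, u. repeat split; auto. apply sub_opp; auto. apply HEm.
    rewrite lin_opp; auto. unfold vsub. rewrite vopp_opp.
    rewrite Hze at 2. rewrite (proj1 HTl), !HTTi.
    rewrite vadd_comm, <- vadd_assoc, vadd_opp, vadd_0. reflexivity.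
  - eapply Rle_trans. apply vnorm_triangle. rewrite vnorm_opp.
    assert (Hnu : vnorm u <= K0 * vnorm x) by (apply (HK0b x u v); auto).
    assert (Hnv : vnorm v <= (1 + K0) * vnorm x).
    { assert (Hvv : v = vsub B x u) by (rewrite Hx, vadd_comm, vadd_sub_cancel; auto).
      rewrite Hvv. eapply Rle_trans. apply vnorm_sub_le. lra. }
    assert (HTu : vnorm (Ti u) <= Cm * vnorm u).
    { pose proof (Hcm 1 u Hu) as Hq. simpl in Hq. rewrite Rmult_1_r in Hq.
      eapply Rle_trans; [exact Hq|]. apply Rmult_le_compat_r; [apply vnorm_nonneg|nra]. }
    apply Rle_trans with (Cp / (1 - tp) * ((1 + K0) * vnorm x) + Cm / (1 - tm) * (Cm * (K0 * vnorm x))).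
    + apply Rplus_le_compat.
      * eapply Rle_trans. apply Hy1n. apply Rmult_le_compat_l; auto.
      * eapply Rle_trans. apply Hzn. apply Rmult_le_compat_l; auto. eapply Rle_trans. apply HTu.
        apply Rmult_le_compat_l; lra.
    + right. ring.
Qed.

(** Uniqueness: the contractions T on E^+ and T^-1 on E^- have no fixed points. *)
Lemma resolvent_rel_unique x y y' : resolvent_rel x y -> resolvent_rel x y' -> y = y'.
Proof.
  intros [y1 [y2 [v [u [Hy1 [Hy2 [Hv [Hu [Hy [Hx [E1 E2]]]]]]]]]]]
         [y1' [y2' [v' [u' [Hy1' [Hy2' [Hv' [Hu' [Hy' [Hx' [E1' E2']]]]]]]]]]].
  rewrite Hx in Hx'. destruct (decomp_unique B Em Ep HEm HEp Hc _ _ _ _ Hu Hv Hu' Hv' Hx') as [<- <-].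
  assert (A1 : vsub B y1 y1' = vzero).
  { apply (contraction_fix_zero B T Ep Cp tp HCp Htp Hcp). apply sub_sub; auto. apply HEp.
    rewrite lin_sub; auto. rewrite E1 at 2. rewrite E1' at 2.
    rewrite vsub_add_add, vsubxx, vadd0l. reflexivity. }
  assert (A2 : vsub B y2 y2' = vzero).
  { apply (contraction_fix_zero B Ti Em Cm tm HCm Htm Hcm). apply sub_sub; auto. apply HEm.
    assert (Hf : T (vsub B y2 y2') = vsub B y2 y2').
    { symmetry. apply vsub_eq0. rewrite lin_sub, vsub_sub4, E2, E2', vsubxx; auto. }
    rewrite <- Hf at 1. apply HTiT. }
  apply vsub_eq0 in A1. apply vsub_eq0 in A2. subst. reflexivity.
Qed.

Lemma resolvent_rel_add x y x' y' :
  resolvent_rel x y -> resolvent_rel x' y' -> resolvent_rel (vadd x x') (vadd y y').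
Proof.
  intros [y1 [y2 [v [u [Hy1 [Hy2 [Hv [Hu [Hy [Hx [E1 E2]]]]]]]]]]]
         [y1' [y2' [v' [u' [Hy1' [Hy2' [Hv' [Hu' [Hy' [Hx' [E1' E2']]]]]]]]]]].
  exists (vadd y1 y1'), (vadd y2 y2'), (vadd v v'), (vadd u u').
  repeat split; try apply (proj1 (proj2 (proj1 HEp))); try apply (proj1 (proj2 (proj1 HEm))); auto.
  - rewrite Hy, Hy'. apply vadd_add4.
  - rewrite Hx, Hx'. apply vadd_add4.
  - rewrite (proj1 HTl), vadd_add4, <- E1, <- E1'. reflexivity.
  - rewrite (proj1 HTl), vsub_add_add, E2, E2'. reflexivity.
Qed.

Lemma resolvent_rel_scal c x y : resolvent_rel x y -> resolvent_rel (vscal c x) (vscal c y).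
Proof.
  intros [y1 [y2 [v [u [Hy1 [Hy2 [Hv [Hu [Hy [Hx [E1 E2]]]]]]]]]]].
  exists (vscal c y1), (vscal c y2), (vscal c v), (vscal c u).
  repeat split; try apply (proj2 (proj2 (proj1 HEp))); try apply (proj2 (proj2 (proj1 HEm))); auto.
  - rewrite Hy. apply vscal_distr_v.
  - rewrite Hx. apply vscal_distr_v.
  - rewrite (proj2 HTl), <- vscal_distr_v, <- E1. reflexivity.
  - rewrite (proj2 HTl), <- vscal_sub, E2. reflexivity.
Qed.

Definition resolvent (x : B) : B := epsilon (inhabits vzero) (resolvent_rel x).

Lemma resolvent_spec x : resolvent_rel x (resolvent x).
Proof.
  unfold resolvent. apply epsilon_spec.
  destruct resolvent_rel_exists as [M [_ HM]]. destruct (HM x) as [y [Hy _]]. eauto.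
Qed.

Lemma resolvent_eq x y : resolvent_rel x y -> resolvent x = y.
Proof. intros Hy. apply (resolvent_rel_unique x); auto. apply resolvent_spec. Qed.

Lemma resolvent_linear : is_linear B resolvent.
Proof.
  split.
  - intros x y. apply resolvent_eq. apply resolvent_rel_add; apply resolvent_spec.
  - intros c x. apply resolvent_eq. apply resolvent_rel_scal; apply resolvent_spec.
Qed.

Lemma resolvent_bound : exists M, 0 <= M /\ forall x, vnorm (resolvent x) <= M * vnorm x.
Proof.
  destruct resolvent_rel_exists as [M [HM0 HM]]. exists M. split; auto. intros x.
  destruct (HM x) as [y [Hy Hn]]. rewrite (resolvent_eq x y Hy). auto.
Qed.

Lemma resolvent_right x : vsub B (resolvent x) (T (resolvent x)) = x.
Proof.
  destruct (resolvent_spec x) as [y1 [y2 [v [u [Hy1 [Hy2 [Hv [Hu [Hy [Hx [E1 E2]]]]]]]]]]].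
  rewrite Hy, (proj1 HTl), vsub_add_add, E2, Hx. rewrite E1 at 1.
  rewrite vadd_sub_cancel, vadd_comm. reflexivity.
Qed.

Lemma telescope h n :
  vsub B (partial_sum B (fun j => Nat.iter j T h) n) (T (partial_sum B (fun j => Nat.iter j T h) n)) =
  vsub B h (Nat.iter n T h).
Proof.
  induction n.
  - simpl. rewrite lin0, vsubxx, vsubxx; auto.
  - change (partial_sum B (fun j => Nat.iter j T h) (S n)) with
      (vadd (partial_sum B (fun j => Nat.iter j T h) n) (Nat.iter n T h)).
    rewrite (proj1 HTl), vsub_add_add, IHn, <- Nat.iter_succ, vsub_sub_sub. reflexivity.
Qed.

Lemma fixed_point_in_F w : T w = w -> closure B eventual_set w.
Proof. intros Hw. apply bounded_approx, fix_bounded, Hw. Qed.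

(** R h lies in F for h in the eventual set: with g = T^N h in E^+, the
    vector y = h + T h + ... + T^(N-1) h + sum_k T^k g solves y - T y = h
    and lies in F, and R h - y is a fixed point of T, hence in F. *)
Lemma resolvent_eventual h : eventual_set h -> closure B eventual_set (resolvent h).
Proof.
  intros Hh. pose proof Hh as [N [HN1 _]].
  pose proof (closure_subspace B eventual_set eventual_subspace) as HF.
  set (g := Nat.iter N T h).
  destruct (neumann_solve B T Ep HTl HTb HEp HEpT Cp tp HCp Htp Hcp g HN1) as [z [_ [Hze [_ HzG]]]].
  assert (HzF : closure B eventual_set z).
  { apply HzG. apply eventual_subspace. apply eventual_T. apply iter_inv; auto. apply eventual_T. }
  set (p := partial_sum B (fun j => Nat.iter j T h) N).
  assert (Hp : eventual_set p).
  { apply partial_sum_in. apply eventual_subspace. intros k. apply iter_inv; auto. apply eventual_T. }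
  set (y := vadd p z).
  assert (Hy : vsub B y (T y) = h).
  { unfold y. rewrite (proj1 HTl), vsub_add_add. unfold p. rewrite telescope. fold g.
    rewrite Hze at 1. rewrite vadd_sub_cancel, vsub_add_cancel. reflexivity. }
  set (w := vsub B (resolvent h) y).
  assert (Hw : T w = w).
  { symmetry. apply vsub_eq0. unfold w.
    rewrite (lin_sub B T), vsub_sub4, resolvent_right, Hy, vsubxx; auto. }
  replace (resolvent h) with (vadd w y) by (unfold w; apply vsub_add_cancel).
  apply (proj1 (proj2 HF)). apply fixed_point_in_F; auto.
  apply (proj1 (proj2 HF)). apply closure_incl; auto. auto.
Qed.

(** By continuity of R, R maps F into F. *)
Lemma resolvent_preserves_F y : closure B eventual_set y -> closure B eventual_set (resolvent y).
Proof.
  intros Hy e He. destruct resolvent_bound as [M [HM0 HM]].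
  destruct (Hy (e / 2 / (M + 1))) as [h [Hh Hyh]].
  { apply Rdiv_lt_0_compat; lra. }
  destruct (resolvent_eventual h Hh (e/2) ltac:(lra)) as [h' [Hh' Hd]].
  exists h'. split; auto. eapply Rle_lt_trans. apply vnorm_sub_tri with (y := resolvent h).
  rewrite <- lin_sub by apply resolvent_linear.
  specialize (HM (vsub B y h)). pose proof (vnorm_nonneg (vsub B y h)).
  assert (M * vnorm (vsub B y h) <= e / 2).
  { apply Rle_trans with ((M + 1) * vnorm (vsub B y h)). nra.
    apply (Rmult_lt_compat_l (M + 1)) in Hyh; [|lra].
    replace ((M + 1) * (e / 2 / (M + 1))) with (e / 2) in Hyh by (field; lra). lra. }
  lra.
Qed.

Lemma one_minus_T_quot_invertible :
  quot_invertible B (closure B (bounded_set B T Ti)) (fun x => vsub B (vscal Cone x) (T x)).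
Proof.
  rewrite closure_bounded_eq. pose proof (closure_subspace B eventual_set eventual_subspace) as HF.
  destruct resolvent_bound as [M [HM0 HM]].
  exists resolvent. split. apply resolvent_linear. split. apply resolvent_preserves_F. split; [|split].
  - intros x. rewrite vscal_1, resolvent_right, vsubxx. apply HF.
  - intros x. apply fixed_point_in_F. symmetry. apply vsub_eq0.
    rewrite (lin_sub B T), vsub_sub4, resolvent_right, vscal_1, vsubxx; auto.
  - exists M. split; auto. intros x r Hr Hq e He.
    destruct (Hq (e / (M + 1))) as [f [Hf Hxf]]. { apply Rdiv_lt_0_compat; lra. }
    exists (resolvent f). split. apply resolvent_preserves_F; auto.
    rewrite <- lin_sub by apply resolvent_linear. eapply Rle_lt_trans. apply HM.
    pose proof (vnorm_nonneg (vsub B x f)).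
    apply Rle_lt_trans with (M * (r + e / (M + 1))). apply Rmult_le_compat_l; lra.
    assert (M * (e / (M + 1)) < e).
    { apply Rmult_lt_reg_r with (M + 1). lra.
      replace (M * (e / (M + 1)) * (M + 1)) with (M * e) by (field; lra). nra. }
    lra.
Qed.

End Core.

Lemma Cmul_comm a b : Cmul a b = Cmul b a.
Proof. destruct a, b. unfold Cmul; simpl. f_equal; ring. Qed.

Lemma Cabs_mul a b : Cabs (Cmul a b) = Cabs a * Cabs b.
Proof.
  destruct a as [a1 a2], b as [b1 b2]. unfold Cabs, Cmul; simpl.
  rewrite <- sqrt_mult by nra. f_equal. ring.
Qed.

Definition Cconj (a : Cx) : Cx := mkCx (Re a) (- Im a).

Lemma Cabs_conj a : Cabs (Cconj a) = Cabs a.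
Proof. destruct a. unfold Cabs, Cconj; simpl. f_equal. ring. Qed.

Lemma Cmul_conj a : Cabs a = 1 -> Cmul a (Cconj a) = Cone.
Proof.
  intro H. assert (Hsq : Re a * Re a + Im a * Im a = 1).
  { unfold Cabs in H. rewrite <- (sqrt_sqrt (Re a * Re a + Im a * Im a)) by nra. rewrite H. ring. }
  destruct a as [a1 a2]. unfold Cmul, Cconj, Cone in *; simpl in *. f_equal; nra.
Qed.

Section Rotation.
Variable B : CBanach.
Variable mu : Cx.
Hypothesis Hmu : Cabs mu = 1.
Variable T : B -> B.
Hypothesis HTl : is_linear B T.

Definition rotate (x : B) : B := vscal mu (T x).

Lemma rotate_linear : is_linear B rotate.
Proof.
  split; intros; unfold rotate.
  - rewrite (proj1 HTl), vscal_distr_v. reflexivity.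
  - rewrite (proj2 HTl), !vscal_assoc, Cmul_comm. reflexivity.
Qed.

Lemma rotate_iter n x : exists c, Cabs c = 1 /\ Nat.iter n rotate x = vscal c (Nat.iter n T x).
Proof.
  induction n.
  - exists Cone. split. unfold Cabs, Cone; simpl. replace (1 * 1 + 0 * 0) with 1 by ring. apply sqrt_1.
    simpl. rewrite vscal_1. reflexivity.
  - destruct IHn as [c [Hc Hi]]. exists (Cmul mu c). split.
    + rewrite Cabs_mul, Hmu, Hc. ring.
    + rewrite !Nat.iter_succ, Hi. unfold rotate. rewrite (proj2 HTl), vscal_assoc. reflexivity.
Qed.

Lemma rotate_iter_norm n x : vnorm (Nat.iter n rotate x) = vnorm (Nat.iter n T x).
Proof. destruct (rotate_iter n x) as [c [Hc Hi]]. rewrite Hi, vnorm_scal, Hc. ring. Qed.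

Lemma rotate_bounded : is_bounded B T -> is_bounded B rotate.
Proof.
  intros [M HM]. exists M. intros x. unfold rotate. rewrite vnorm_scal, Hmu, Rmult_1_l. auto.
Qed.

Lemma rotate_invariant (E : B -> Prop) : is_subspace B E ->
  (forall x, E x -> E (T x)) -> forall x, E x -> E (rotate x).
Proof. intros HE HT x Hx. apply (proj2 (proj2 HE)). auto. Qed.

End Rotation.

Lemma bounded_set_norm_invariant (B : CBanach) (T Ti T' Ti' : B -> B) :
  (forall n x, vnorm (Nat.iter n T' x) = vnorm (Nat.iter n T x)) ->
  (forall n x, vnorm (Nat.iter n Ti' x) = vnorm (Nat.iter n Ti x)) ->
  bounded_set B T' Ti' = bounded_set B T Ti.
Proof.
  intros H1 H2. apply functional_extensionality. intros x. apply propositional_extensionality.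
  unfold bounded_set. split.
  - intros [K [k [m [a [b [c [d [e [f g]]]]]]]]]. exists K, k, m. repeat split; auto;
      intros n; [rewrite <- H1 | rewrite <- H2]; auto.
  - intros [K [k [m [a [b [c [d [e [f g]]]]]]]]]. exists K, k, m. repeat split; auto;
      intros n; [rewrite H1 | rewrite H2]; auto.
Qed.

Section RotatedHyperbolic.
Variable B : CBanach.
Variables T Ti : B -> B.
Variables lam mu : Cx.
Hypothesis Hlam : Cabs lam = 1.
Hypothesis Hmu : Cabs mu = 1.
Hypothesis Hlm : Cmul lam mu = Cone.
Hypothesis Hml : Cmul mu lam = Cone.
Hypothesis HT : L_aut B T Ti.

Lemma rotate_L_aut : L_aut B (rotate B mu T) (rotate B lam Ti).
Proof.
  destruct HT as [HTl [HTb [HTil [HTib [HTTi HTiT]]]]].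
  split; [|split; [|split; [|split; [|split]]]].
  - apply rotate_linear; auto.
  - apply rotate_bounded; auto.
  - apply rotate_linear; auto.
  - apply rotate_bounded; auto.
  - intros x. unfold rotate. rewrite (proj2 HTl), vscal_assoc, HTTi, Hml, vscal_1. reflexivity.
  - intros x. unfold rotate. rewrite (proj2 HTil), vscal_assoc, HTiT, Hlm, vscal_1. reflexivity.
Qed.

Lemma rotate_generalized_hyperbolic : generalized_hyperbolic B T Ti ->
  generalized_hyperbolic B (rotate B mu T) (rotate B lam Ti).
Proof.
  destruct HT as [HTl [_ [HTil _]]].
  intros [Em [Ep [HEm [HEp [Hc [HEpT [HEmT [[Cp [tp [HCp [Htp Hcp]]]] [Cm [tm [HCm [Htm Hcm]]]]]]]]]]]].
  exists Em, Ep. do 3 (split; [assumption|]). split; [|split; [|split]].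
  - apply rotate_invariant; [apply HEp|exact HEpT].
  - apply rotate_invariant; [apply HEm|exact HEmT].
  - exists Cp, tp. do 2 (split; [assumption|]). intros n x Hx. rewrite rotate_iter_norm; auto.
  - exists Cm, tm. do 2 (split; [assumption|]). intros n x Hx. rewrite rotate_iter_norm; auto.
Qed.

Lemma rotate_bounded_set :
  bounded_set B (rotate B mu T) (rotate B lam Ti) = bounded_set B T Ti.
Proof.
  destruct HT as [HTl [_ [HTil _]]].
  apply bounded_set_norm_invariant; intros; apply rotate_iter_norm; auto.
Qed.

End RotatedHyperbolic.

Lemma generalized_hyperbolic_core (B : CBanach) (T Ti : B -> B) :
  L_aut B T Ti -> generalized_hyperbolic B T Ti ->
  is_subspace B (closure B (bounded_set B T Ti)) /\
  quot_invertible B (closure B (bounded_set B T Ti)) (fun x => vsub B (vscal Cone x) (T x)).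
Proof.
  intros [HTl [HTb [HTil [HTib [HTTi HTiT]]]]]
    [Em [Ep [HEm [HEp [Hc [HEpT [HEmT [[Cp [tp [HCp [Htp Hcp]]]] [Cm [tm [HCm [Htm Hcm]]]]]]]]]]]].
  destruct (proj_bound B Em Ep HEm HEp Hc) as [K0 [HK0 HK0b]].
  split.
  - rewrite (closure_bounded_eq B T Ti HTl HTil HTTi HTiT Em Ep HEm HEp Hc HEpT HEmT
               Cp tp Cm tm HCp Htp Hcp HCm Htm Hcm K0 HK0 HK0b).
    apply closure_subspace, eventual_subspace; auto.
  - exact (one_minus_T_quot_invertible B T Ti HTl HTb HTil HTib HTTi HTiT Em Ep HEm HEp Hc
             HEpT HEmT Cp tp Cm tm HCp Htp Hcp HCm Htm Hcm K0 HK0 HK0b).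
Qed.

Lemma quot_invertible_scal (B : CBanach) (F : B -> Prop) (S S' : B -> B) (lam mu : Cx) :
  is_subspace B F -> Cabs mu = 1 -> Cmul lam mu = Cone -> Cmul mu lam = Cone ->
  (forall x, S' x = vscal lam (S x)) -> quot_invertible B F S -> quot_invertible B F S'.
Proof.
  intros HF Hmu Hlm Hml HS [R' [HR'l [HR'F [HR1 [HR2 [M [HM0 HM]]]]]]].
  exists (fun x => R' (vscal mu x)). split; [|split; [|split; [|split]]].
  - split; intros.
    + rewrite vscal_distr_v, (proj1 HR'l). reflexivity.
    + rewrite vscal_assoc, Cmul_comm, <- vscal_assoc, (proj2 HR'l). reflexivity.
  - intros x Hx. apply HR'F. apply (proj2 (proj2 HF)). auto.
  - intros x. rewrite HS.
    replace (vsub B (vscal lam (S (R' (vscal mu x)))) x)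
      with (vscal lam (vsub B (S (R' (vscal mu x))) (vscal mu x)))
      by (rewrite vscal_sub, vscal_assoc, Hlm, (vscal_1 x); reflexivity).
    apply (proj2 (proj2 HF)). apply HR1.
  - intros x. rewrite HS, vscal_assoc, Hml, vscal_1. apply HR2.
  - exists M. split; auto. intros x r Hr Hq. apply HM; auto.
    intros e He. destruct (Hq e He) as [f [Hf Hxf]]. exists (vscal mu f). split.
    + apply (proj2 (proj2 HF)); auto.
    + rewrite <- vscal_sub, vnorm_scal, Hmu, Rmult_1_l. auto.
Qed.

Theorem theorem4 (B : CBanach) (T Tinv : B -> B) :
  L_aut B T Tinv ->
  generalized_hyperbolic B T Tinv ->
  ~ (forall x, closure B (bounded_set B T Tinv) x) ->
  quot_hyperbolic B (closure B (bounded_set B T Tinv)) T.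
Proof.
  intros HT HG _ lam Hlam Hspec. apply Hspec. clear Hspec.
  set (mu := Cconj lam).
  assert (Hmu : Cabs mu = 1) by (unfold mu; rewrite Cabs_conj; auto).
  assert (Hlm : Cmul lam mu = Cone) by (apply Cmul_conj; auto).
  assert (Hml : Cmul mu lam = Cone) by (rewrite Cmul_comm; auto).
  destruct (generalized_hyperbolic_core B (rotate B mu T) (rotate B lam Tinv))
    as [Hsub Hinv].
  - apply rotate_L_aut; auto.
  - apply rotate_generalized_hyperbolic; auto.
  - rewrite rotate_bounded_set in Hsub, Hinv by auto.
    apply (quot_invertible_scal B _ (fun x => vsub B (vscal Cone x) (rotate B mu T x)) _
             lam mu Hsub Hmu Hlm Hml); auto.
    intros x. rewrite vscal_1, vscal_sub. unfold rotate.
    rewrite vscal_assoc, Hlm, vscal_1. reflexivity.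
Qed.
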